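(* Let $\Bbbk$ be a field, $n\ge2$, $q\in\Bbbk$ a primitive $n$-th root of unity, $T_n(q)$ the Taft algebra and $A$ a unital associative $\Bbbk$-algebra. Let $\cdot:\Bbbk C_n\otimes A\to A$ be a partial action of $\Bbbk C_n$ on $A$ with $g\cdot1_A=0$. Then for each $w\in A$ such that $w^n\in Z(A)$ and $g^i\cdot w=q^{-i}(g^i\cdot1_A)w$ for all $0\le i\le n-1$, the linear map $\cdot:T_n(q)\otimes A\to A$ defined by $$g^ix^j\cdot a=q^{-ij}\sum_{k=0}^{j}(-1)^kq^{-\frac{k(k-1)}{2}}\binom{j}{k}_{q^{-1}}w^{j-k}(g^{i+k}\cdot a)w^k\qquad(0\le i,j\le n-1,\ a\in A)$$ is a partial action of $T_n(q)$ on $A$.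
   Context: The Taft algebra $T_n(q)$ is the Hopf algebra generated by $g,x$ with relations $g^n=1$, $x^n=0$, $xg=qgx$, basis $\{g^ix^j:0\le i,j<n\}$, $g$ group-like, $\Delta(x)=x\otimes1+g\otimes x$, $\varepsilon(x)=0$. $\Bbbk C_n=\mathrm{span}\{1,g,\dots,g^{n-1}\}\subseteq T_n(q)$ is the group algebra of the cyclic group $C_n=\langle g\rangle$; exponents of $g$ are read modulo $n$. $Z(A)$ is the center of $A$. A partial action of a bialgebra $H$ on $A$ is a linear map $\cdot:H\otimes A\to A$ with $1_H\cdot a=a$, $h\cdot(ab)=(h_1\cdot a)(h_2\cdot b)$, $h\cdot(k\cdot a)=(h_1\cdot1_A)(h_2k\cdot a)$. $q$-binomials: $\binom{0}{0}_p=1$, $\binom{N}{m}_p=0$ if $m>N$ or $m<0$, and $\binom{N}{m}_p=\binom{N-1}{m-1}_p+p^m\binom{N-1}{m}_p$ for $N\ge1$, $0\le m\le N$. *)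

From HB Require Import structures.
From mathcomp Require Import all_boot all_order all_algebra.
Set Implicit Arguments. Unset Strict Implicit. Unset Printing Implicit Defensive.
Import Order.TTheory GRing.Theory Num.Theory.
Local Open Scope ring_scope.

Lemma ord_pos_n (n : nat) (i : 'I_n) : (0 < n)%N.
Proof. exact: leq_ltn_trans (leq0n i) (ltn_ord i). Qed.

Definition oadd (n : nat) (i : 'I_n) (k : nat) : 'I_n :=
  Ordinal (ltn_pmod (i + k) (ord_pos_n i)).

Fixpoint qbinom (K : fieldType) (p : K) (N m : nat) : K :=
  match N with
  | 0 => if m == 0%N then 1 else 0
  | N'.+1 =>
      if (N < m)%N then 0 else
      match m with
      | 0 => qbinom p N' 0
      | m'.+1 => qbinom p N' m' + p ^+ m * qbinom p N' m
      end
  end.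

(* Finite-dimensional algebras/coalgebras given on a basis indexed by *)
(* a finType I.  Elements of H are coefficient vectors {ffun I -> K}, *)
(* elements of H (x) H are {ffun I * I -> K}.                         *)
Section BasisAlg.
Variables (K : fieldType) (I : finType).

Definition scv (J : finType) (c : K) (f : {ffun J -> K}) : {ffun J -> K} :=
  [ffun d => c * f d].

Definition bvec (i : I) : {ffun I -> K} := [ffun j => (i == j)%:R].

Definition tens (u v : {ffun I -> K}) : {ffun (I * I) -> K} :=
  [ffun s => u s.1 * v s.2].

Definition mulH (mulb : I -> I -> {ffun I -> K}) (u v : {ffun I -> K})
  : {ffun I -> K} :=
  \sum_(i : I) \sum_(j : I) scv (u i * v j) (mulb i j).

Definition mulHH (mulb : I -> I -> {ffun I -> K})
  (U V : {ffun (I * I) -> K}) : {ffun (I * I) -> K} :=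
  \sum_(p : I * I) \sum_(r : I * I)
     scv (U p * V r) (tens (mulb p.1 r.1) (mulb p.2 r.2)).

Definition comulH (comulb : I -> {ffun (I * I) -> K}) (u : {ffun I -> K})
  : {ffun (I * I) -> K} :=
  \sum_(i : I) scv (u i) (comulb i).

Variable A : algType K.

Definition actH (act : I -> A -> A) (h : {ffun I -> K}) (a : A) : A :=
  \sum_(i : I) h i *: act i a.

Definition is_partial_action (oneH : {ffun I -> K})
  (mulb : I -> I -> {ffun I -> K}) (comulb : I -> {ffun (I * I) -> K})
  (act : I -> A -> A) : Prop :=
  [/\ (forall (i : I) (c : K) (a b : A), act i (c *: a + b) = c *: act i a + act i b),
      (forall a : A, actH act oneH a = a),
      (forall (h : {ffun I -> K}) (a b : A),
          actH act h (a * b) =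
          \sum_(p : I * I) comulH comulb h p *: (act p.1 a * act p.2 b)) &
      (forall (h k : {ffun I -> K}) (a : A),
          actH act h (actH act k a) =
          \sum_(p : I * I) comulH comulb h p *:
             (act p.1 1 * actH act (mulH mulb (bvec p.2) k) a))].

End BasisAlg.

(* The group algebra k C_n, basis g^i, i : 'I_n.                      *)
Section GroupAlg.
Variables (K : fieldType) (n : nat).

Definition oneCn : {ffun 'I_n -> K} := [ffun j => (val j == 0%N)%:R].
Definition mulCn (i k : 'I_n) : {ffun 'I_n -> K} := bvec K (oadd i k).
Definition comulCn (i : 'I_n) : {ffun ('I_n * 'I_n) -> K} :=
  [ffun p => ((p.1 == i) && (p.2 == i))%:R].
End GroupAlg.

(* The Taft algebra T_n(q): basis g^i x^j indexed by (i, j).          *)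
(* Product from the relations g^n = 1, x^n = 0, xg = q gx:            *)
(*   g^i x^j * g^k x^l = q^(jk) g^(i+k) x^(j+l)   (0 if j + l >= n).  *)
(* Comultiplication: Delta is the algebra map with Delta g = g(x)g,   *)
(* Delta x = x(x)1 + g(x)x, so Delta(g^i x^j) = (Delta g)^i (Delta x)^j*)
(* computed in the algebra T_n(q) (x) T_n(q).                         *)
Section Taft.
Variables (K : fieldType) (n : nat) (q : K).

Notation TI := ('I_n * 'I_n)%type.

Definition oneTaft : {ffun TI -> K} :=
  [ffun b => ((val b.1 == 0%N) && (val b.2 == 0%N))%:R].
Definition gTaft : {ffun TI -> K} :=
  [ffun b => ((val b.1 == 1 %% n)%N && (val b.2 == 0%N))%:R].
Definition xTaft : {ffun TI -> K} :=
  [ffun b => ((val b.1 == 0%N) && (val b.2 == 1%N))%:R].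

Definition mulTaft (b c : TI) : {ffun TI -> K} :=
  [ffun d => if (val d.1 == (b.1 + c.1) %% n)%N && (val d.2 == b.2 + c.2)%N
             then q ^+ (b.2 * c.1) else 0].

Definition powTaft2 (U : {ffun (TI * TI) -> K}) (m : nat) : {ffun (TI * TI) -> K} :=
  iter m (mulHH mulTaft U) (tens oneTaft oneTaft).

Definition comulTaft (b : TI) : {ffun (TI * TI) -> K} :=
  mulHH mulTaft (powTaft2 (tens gTaft gTaft) b.1)
             (powTaft2 (tens xTaft oneTaft + tens gTaft xTaft) b.2).

Variable A : algType K.

Definition taft_act (actC : 'I_n -> A -> A) (w : A) (b : TI) (a : A) : A :=
  q ^- (b.1 * b.2) *:
   \sum_(k < b.2.+1)
     (((-1) ^+ k * q ^- ((k * (k - 1)) %/ 2) * qbinom q^-1 b.2 k) *: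
        (w ^+ (b.2 - k) * actC (oadd b.1 k) a * w ^+ k)).

End Taft.

From HB Require Import structures.
From mathcomp Require Import all_boot all_order all_algebra.
From mathcomp Require Import ring zify.
Set Implicit Arguments. Unset Strict Implicit. Unset Printing Implicit Defensive.
Import GRing.Theory.
Local Open Scope ring_scope.

(* The proposed map satisfies g^i x^0 . a = g^i . a and
     g^i x^(j+1) . a = q^-i (w (g^i x^j . a) - (g^(i+1) x^j . a) w),
   i.e. x acts as the twisted commutator a |-> w a - (g . a) w, and the formula
   of the statement is the closed form of this recursion.  The twisted
   commutator is a skew derivation, so by induction on j its iterates obey a
   q-Leibniz rule, which is exactly the multiplicativity axiom for
     Delta(g^i x^j) = sum_k binom(j,k)_q g^(i+k) x^(j-k) (x) g^i x^k;
   the hypothesis g^i . w = q^-i (g^i . 1) w lets g^i . _ pass through the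
   recursion, which gives the composition axiom.  The relation x^n = 0 is
   respected because binom(n,k)_(q^-1) = 0 for 0 < k < n and the top
   coefficient is -1, so g^i x^n . a = q^-(in) (w^n (g^i . a) - (g^i . a) w^n),
   which vanishes as w^n is central.  All axioms are linear in the elements of
   T_n(q), so it suffices to check them on the basis g^i x^j. *)

Section QBinomial.
Variables (K : fieldType) (p : K).

Lemma qbinom_small N m : (N < m)%N -> qbinom p N m = 0.
Proof. by case: N => [|N] /=; [case: m | move=> ->]. Qed.

Lemma qbinom0 N : qbinom p N 0 = 1.
Proof. by elim: N => //= N ->. Qed.

Lemma qbinomS N m :
  qbinom p N.+1 m.+1 = qbinom p N m + p ^+ m.+1 * qbinom p N m.+1.
Proof.
rewrite /=; case: (ltnP N.+1 m.+1) => // lt_N_m.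
by rewrite !qbinom_small ?mulr0 ?addr0 // ltnW.
Qed.

Lemma qbinomnn N : qbinom p N N = 1.
Proof. by elim: N => // N IH; rewrite qbinomS IH qbinom_small ?mulr0 ?addr0. Qed.

Lemma qbinomS_dual N k :
  qbinom p N.+1 k.+1 = qbinom p N k.+1 + p ^+ (N - k) * qbinom p N k.
Proof.
elim: N k => [|N IH] [|k].
- by rewrite qbinomnn qbinom_small // qbinom0 mulr1 add0r.
- by rewrite !qbinom_small // mulr0 addr0.
- have e1 : qbinom p N.+2 1 = 1 + p * qbinom p N.+1 1 by rewrite qbinomS qbinom0.
  have e2 : qbinom p N.+1 1 = 1 + p * qbinom p N 1 by rewrite qbinomS qbinom0.
  have := IH 0%N; rewrite qbinom0 subn0 mulr1 e2 => e3.
  by rewrite e1 e2 {1}e3 qbinom0 subn0 mulr1 exprS; ring.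
rewrite subSS [in RHS](qbinomS N k.+1) [in RHS](qbinomS N k) qbinomS IH (IH k.+1).
case: (ltnP k N) => [lt_k_N | le_N_k]; last first.
  by rewrite (@qbinom_small N k.+1) ?(@qbinom_small N k.+2) ?ltnS ?(leqW le_N_k) //; ring.
have -> : (N - k = (N - k.+1).+1)%N by lia.
have shift : p ^+ k.+2 * p ^+ (N - k.+1) = p ^+ (N - k.+1).+1 * p ^+ k.+1.
  by rewrite -!exprD; congr (_ ^+ _); lia.
by rewrite !mulrDr !mulrA shift; ring.
Qed.

Lemma qbinom_ratio N k :
  (1 - p ^+ (N - k)) * qbinom p N k = (1 - p ^+ k.+1) * qbinom p N k.+1.
Proof.
have := qbinomS_dual N k; rewrite qbinomS => pascal.
apply/eqP; rewrite -subr_eq0; apply/eqP.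
transitivity ((qbinom p N k + p ^+ k.+1 * qbinom p N k.+1) -
              (qbinom p N k.+1 + p ^+ (N - k) * qbinom p N k)); first by ring.
by rewrite pascal subrr.
Qed.

Lemma big_qbinomS (V : lmodType K) N (F : nat -> V) :
  \sum_(0 <= m < N.+2) qbinom p N.+1 m *: F m =
  \sum_(0 <= m < N.+1) ((p ^+ m * qbinom p N m) *: F m + qbinom p N m *: F m.+1).
Proof.
rewrite big_split [LHS]big_nat_recl // qbinom0.
under eq_big_nat => m _ do rewrite qbinomS scalerDl.
rewrite big_split addrCA [RHS]addrC; congr (_ + _).
rewrite [RHS]big_nat_recl // [in LHS]big_nat_recr //= qbinom_small // mulr0 scale0r.
by rewrite addr0 qbinom0 expr0 mulr1.
Qed.

Lemma prim_root_qbinom_eq0 n k :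
  n.-primitive_root p -> (0 < k < n)%N -> qbinom p n k = 0.
Proof.
move=> prim_p /andP[]; case: k => // k _.
have next m : (m.+1 < n)%N ->
    (1 - p ^+ (n - m)) * qbinom p n m = 0 -> qbinom p n m.+1 = 0.
  move=> lt_m_n; rewrite qbinom_ratio => /eqP; rewrite mulf_eq0 subr_eq0 eq_sym.
  by rewrite -[1](expr0 p) (eq_prim_root_expr prim_p) mod0n modn_small //= => /eqP.
elim: k => [|k IH] lt_k_n; apply: next => //.
  by rewrite subn0 (prim_expr_order prim_p) subrr mul0r.
by rewrite IH ?mulr0 // ltnW.
Qed.

End QBinomial.

Section PrimitiveRoot.
Variables (K : fieldType) (n : nat) (z : K).
Hypothesis prim_z : n.-primitive_root z.

Lemma prim_root_inv : n.-primitive_root z^-1.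
Proof.
have n_gt0 := prim_order_gt0 prim_z.
have z_neq0 : z != 0 by rewrite (prim_root_eq0 prim_z) -lt0n.
have -> : z^-1 = z ^+ n.-1.
  by apply: (mulfI z_neq0); rewrite divff // -exprS prednK // (prim_expr_order prim_z).
by rewrite (prim_root_exp_coprime _ prim_z) coprimePn.
Qed.

Lemma prim_root_expr_triangle : z ^+ ((n * (n - 1)) %/ 2) = (-1) ^+ (n - 1).
Proof.
have n_gt0 := prim_order_gt0 prim_z.
have def_n := odd_double_half n; rewrite -muln2 in def_n.
move: (n./2) def_n => m def_n.
case: (boolP (odd n)) def_n => _ def_n.
  have def_n1 : (n - 1 = m * 2)%N by lia.
  by rewrite def_n1 mulnA mulnK // exprM (prim_expr_order prim_z) expr1n -signr_odd oddM andbF.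
have {def_n} def_n : n = (m * 2)%N by rewrite -def_n.
have def_e : ((n * (n - 1)) %/ 2 = m * (n - 1))%N by rewrite {1}def_n mulnAC mulnK.
have zm : z ^+ m = -1.
  have : (z ^+ m) ^+ 2 == 1 by rewrite -exprM -def_n (prim_expr_order prim_z).
  rewrite sqrf_eq1 -{1}(expr0 z) (eq_prim_root_expr prim_z) mod0n => /orP[|/eqP //].
  by rewrite modn_small; lia.
by rewrite def_e exprM zm.
Qed.

End PrimitiveRoot.

Lemma triangle_succ k : ((k.+1 * (k.+1 - 1)) %/ 2 = (k * (k - 1)) %/ 2 + k)%N.
Proof.
have -> : (k.+1 * (k.+1 - 1) = k * 2 + k * (k - 1))%N by case: k => [|k]; nia.
by rewrite divnMDl // addnC.
Qed.

Section TaftCoef.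
Variables (K : fieldType) (q : K).

Definition taft_coef (j k : nat) : K :=
  (-1) ^+ k * q ^- ((k * (k - 1)) %/ 2) * qbinom q^-1 j k.

Lemma taft_coef0 j : taft_coef j 0 = 1.
Proof. by rewrite /taft_coef qbinom0 expr0 mul0n div0n expr0 invr1 !mul1r. Qed.

Lemma taft_coef_small j k : (j < k)%N -> taft_coef j k = 0.
Proof. by move=> lt_j_k; rewrite /taft_coef qbinom_small // mulr0. Qed.

Lemma taft_coefS j k : taft_coef j.+1 k.+1 = taft_coef j k.+1 - q ^- j * taft_coef j k.
Proof.
rewrite /taft_coef qbinomS_dual triangle_succ -!exprVn mulrDr.
case: (ltnP j k) => [lt_j_k | le_k_j].
  by rewrite (qbinom_small _ lt_j_k) !mulr0 subr0 addr0.
have -> : j = ((j - k) + k)%N by rewrite subnK.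
by rewrite addnK !exprD exprS; ring.
Qed.

Lemma big_taft_coefS (V : lmodType K) j (X : nat -> V) :
  \sum_(0 <= k < j.+2) taft_coef j.+1 k *: X k =
  \sum_(0 <= k < j.+1) taft_coef j k *: X k
    - q ^- j *: \sum_(0 <= k < j.+1) taft_coef j k *: X k.+1.
Proof.
rewrite big_nat_recl // taft_coef0.
under eq_big_nat => k _ do rewrite taft_coefS scalerBl.
rewrite sumrB addrA scaler_sumr; congr (_ - _); last first.
  by apply: eq_big_nat => k _; rewrite scalerA.
rewrite [RHS]big_nat_recl // taft_coef0 big_nat_recr //= taft_coef_small //.
by rewrite scale0r addr0.
Qed.

Lemma taft_coef_order n : n.-primitive_root q -> taft_coef n n = -1.
Proof.
move=> prim_q; have n_gt0 := prim_order_gt0 prim_q.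
rewrite /taft_coef qbinomnn mulr1 (prim_root_expr_triangle prim_q).
by rewrite -exprB ?leq_subr ?unitrN1 // subKn.
Qed.

Lemma taft_coef_prim_eq0 n k :
  n.-primitive_root q -> (0 < k < n)%N -> taft_coef n k = 0.
Proof.
move=> prim_q lt_k; rewrite /taft_coef.
by rewrite (prim_root_qbinom_eq0 (prim_root_inv prim_q)) // mulr0.
Qed.

End TaftCoef.

Section LinearFun.
Variables (R : pzRingType) (U V : lmodType R) (f : U -> V).
Hypothesis f_lin : linear f.

HB.instance Definition _ := GRing.isLinear.Build R U V *:%R f f_lin.

Lemma linear_fun0 : f 0 = 0.
Proof. exact: linear0. Qed.

Lemma linear_funZ c u : f (c *: u) = c *: f u.
Proof. exact: linearZ. Qed.

Lemma linear_funB u v : f (u - v) = f u - f v.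
Proof. exact: linearB. Qed.

Lemma linear_fun_sum (I : Type) (r : seq I) (c : I -> R) (x : I -> U) :
  f (\sum_(i <- r) c i *: x i) = \sum_(i <- r) c i *: f (x i).
Proof. by rewrite linear_sum; apply: eq_bigr => i _; rewrite linearZ. Qed.

End LinearFun.

Lemma twisted_commutatorM (K : fieldType) (A : algType K) (u v b e c : K) (w x y x' y' : A) :
  u * v = c -> b * e = c ->
  u *: (v *: (w * x - x' * w) * y) + b *: (x' * (e *: (w * y - y' * w)))
    = c *: (w * (x * y) - x' * y' * w).
Proof.
move=> uv be; rewrite -scalerAl scalerA uv -scalerAr scalerA be -scalerDr.
by rewrite mulrBl mulrBr !mulrA addrA subrK.
Qed.

(* [alpha i] stands for [g^i . _]; the hypotheses on [alpha] introduced below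
   say that it is a partial action of the monoid (nat, +). *)
Section TwistedCommutator.
Variables (K : fieldType) (q : K) (A : algType K) (alpha : nat -> A -> A) (w : A).

Fixpoint gx_act (i j : nat) (a : A) {struct j} : A :=
  if j is j'.+1 then q ^- i *: (w * gx_act i j' a - gx_act i.+1 j' a * w)
  else alpha i a.

Lemma gx_actE i j a :
  gx_act i j a = q ^- (i * j) *:
    \sum_(0 <= k < j.+1) taft_coef q j k *: (w ^+ (j - k) * alpha (i + k) a * w ^+ k).
Proof.
elim: j i => [|j IH] i /=.
  by rewrite big_nat1 muln0 expr0 invr1 taft_coef0 !scale1r subnn !expr0 mulr1 mul1r addn0.
set X := fun k => w ^+ (j.+1 - k) * alpha (i + k) a * w ^+ k.
have wS : w * \sum_(0 <= k < j.+1) taft_coef q j k *: (w ^+ (j - k) * alpha (i + k) a * w ^+ k)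
    = \sum_(0 <= k < j.+1) taft_coef q j k *: X k.
  rewrite mulr_sumr; apply: eq_big_nat => k /andP[_ lt_k_j].
  by rewrite -scalerAr /X !mulrA -exprS subSn.
have Sw :
    (\sum_(0 <= k < j.+1) taft_coef q j k *: (w ^+ (j - k) * alpha (i.+1 + k) a * w ^+ k)) * w
    = \sum_(0 <= k < j.+1) taft_coef q j k *: X k.+1.
  rewrite mulr_suml; apply: eq_big_nat => k _.
  by rewrite -scalerAl /X subSS addSnnS exprSr !mulrA.
rewrite !IH -!scalerAl -!scalerAr wS Sw big_taft_coefS.
rewrite -!exprVn !scalerBr !scalerA -!exprD.
by congr (_ *: _ - _ *: _); congr (_ ^+ _); lia.
Qed.

Hypothesis alpha_linear : forall i, linear (alpha i).

Lemma gx_act_linear i j : linear (gx_act i j).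
Proof.
elim: j i => [|j IH] i c a b /=; first exact: alpha_linear.
rewrite !IH mulrDr mulrDl -scalerAr -scalerAl opprD addrACA -scalerBr.
by rewrite scalerA mulrC -scalerA -scalerDr.
Qed.

Hypothesis q_neq0 : q != 0.
Hypothesis alphaM : forall i a b, alpha i (a * b) = alpha i a * alpha i b.

Lemma gx_actM i j a b :
  gx_act i j (a * b) =
  \sum_(0 <= m < j.+1) qbinom q j m *: (gx_act (i + m) (j - m) a * gx_act i m b).
Proof.
elim: j i => [|j IH] i; first by rewrite big_nat1 /= alphaM addn0 scale1r.
rewrite big_qbinomS /= !IH mulr_sumr mulr_suml -sumrB scaler_sumr.
apply: eq_big_nat => m /andP[_ le_m_j].
rewrite -scalerAr -scalerAl -scalerBr scalerA addSn subSn //= subSS addnS.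
by symmetry; apply: twisted_commutatorM; rewrite ?exprD; field; rewrite !expf_neq0.
Qed.

Hypothesis alpha_comp : forall i k a, alpha i (alpha k a) = alpha i 1 * alpha (i + k) a.
Hypothesis alpha_w : forall i, alpha i w = q ^- i *: (alpha i 1 * w).

Lemma alpha_wM i y : alpha i (w * y) = q ^- i *: (alpha i 1 * w * alpha i y).
Proof. by rewrite alphaM alpha_w -scalerAl. Qed.

Lemma alpha_Mw i y : alpha i (y * w) = q ^- i *: (alpha i y * w).
Proof. by rewrite alphaM alpha_w -scalerAr mulrA -alphaM mulr1. Qed.

Lemma alpha1_w_alpha1 i : alpha i 1 * w * alpha i 1 = alpha i 1 * w.
Proof.
apply: (scalerI (expf_neq0 i (invr_neq0 q_neq0))); rewrite exprVn.
by rewrite -alpha_wM mulr1 alpha_w.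
Qed.

Lemma alpha_gx_act i k l a : alpha i (gx_act k l a) = alpha i 1 * gx_act (i + k) l a.
Proof.
elim: l k => [|l IH] k /=; first exact: alpha_comp.
rewrite linear_funZ // linear_funB // alpha_wM alpha_Mw !IH addnS.
rewrite -!scalerAr scalerBr !scalerA -invfM -exprD addnC mulrBr scalerBr.
by rewrite mulrA alpha1_w_alpha1 !mulrA.
Qed.

Lemma gx_act_comp i j k l a :
  gx_act i j (gx_act k l a) =
  \sum_(0 <= m < j.+1) (qbinom q j m * q ^+ (m * k)) *:
     (gx_act (i + m) (j - m) 1 * gx_act (i + k) (m + l) a).
Proof.
elim: j i => [|j IH] i.
  by rewrite big_nat1 /= alpha_gx_act addn0 mul1r mul0n expr0 scale1r.
under [RHS]eq_big_nat => m _ do rewrite -scalerA.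
rewrite big_qbinomS /= !IH mulr_sumr mulr_suml -sumrB scaler_sumr.
apply: eq_big_nat => m /andP[_ le_m_j].
rewrite !scalerA -scalerAr -scalerAl -scalerBr scalerA !addSn subSn //= subSS addnS.
by symmetry; apply: twisted_commutatorM; rewrite ?mulSn ?exprD; field; rewrite !expf_neq0.
Qed.

Variable n : nat.
Hypothesis prim_q : n.-primitive_root q.
Hypothesis alpha_mod : forall i a, alpha (i %% n) a = alpha i a.

Lemma gx_act_mod i j a : gx_act (i %% n) j a = gx_act i j a.
Proof.
rewrite !gx_actE -(prim_expr_mod prim_q) modnMml (prim_expr_mod prim_q).
by congr (_ *: _); apply: eq_big_nat => k _; rewrite -alpha_mod modnDml alpha_mod.
Qed.

Hypothesis w_central : forall y, w ^+ n * y = y * w ^+ n.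

Lemma gx_act_order i a : gx_act i n a = 0.
Proof.
have n_gt0 := prim_order_gt0 prim_q.
rewrite gx_actE big_nat_recr //= big_ltn // taft_coef0 scale1r subn0 expr0 mulr1 addn0.
rewrite big_nat_cond big1 ?addr0 => [|k /andP[lt_k _]]; last first.
  by rewrite taft_coef_prim_eq0 ?scale0r.
rewrite taft_coef_order // subnn expr0 mul1r -(alpha_mod (i + n)) modnDr alpha_mod.
by rewrite scaleN1r w_central subrr scaler0.
Qed.

Lemma gx_act_ge i j a : (n <= j)%N -> gx_act i j a = 0.
Proof.
move=> /subnK <-; elim: (j - n)%N i => [|t IH] i /=; first exact: gx_act_order.
by rewrite !IH mulr0 mul0r subrr scaler0.
Qed.

End TwistedCommutator.

Local Notation "{ 'coef' J , K }" := {ffun J -> K^o} (format "{ 'coef'  J ,  K }").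

Section BasisCalculus.
Variables (K : fieldType) (I : finType).

Lemma sum_delta (V : lmodType K) (J : finType) (i : J) (F : J -> V) :
  \sum_j (i == j)%:R *: F j = F i.
Proof.
rewrite (bigD1 i) //= eqxx scale1r big1 ?addr0 // => j ne_j_i.
by rewrite eq_sym (negPf ne_j_i) scale0r.
Qed.

Lemma scvE (J : finType) (c : K) (f : {ffun J -> K}) : scv c f = c *: (f : {coef J, K}).
Proof. by apply/ffunP => x; rewrite !ffunE. Qed.

Lemma bvecE (J : finType) (i j : J) : bvec K i j = (i == j)%:R.
Proof. by rewrite ffunE. Qed.

Lemma sum_bvec (V : lmodType K) (J : Type) (r : seq J) (c : J -> K) (P : J -> I) (F : I -> V) :
  \sum_i (\sum_(k <- r) c k *: (bvec K (P k) : {coef I, K})) i *: F i =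
  \sum_(k <- r) c k *: F (P k).
Proof.
under eq_bigr => i _ do rewrite sum_ffunE scaler_suml.
rewrite exchange_big /=; apply: eq_bigr => k _.
under eq_bigr => i _ do rewrite ffunE bvecE -scalerA.
by rewrite -scaler_sumr sum_delta.
Qed.

Lemma tens_bvec (i j : I) : tens (bvec K i) (bvec K j) = bvec K (i, j).
Proof.
apply/ffunP => -[x y]; rewrite !ffunE /= xpair_eqE.
by case: (i == x); case: (j == y); rewrite ?mul1r ?mul0r.
Qed.

(* Without [K := K], [tens] would be elaborated over [K^o]. *)
Lemma tensZl c (u v : {ffun I -> K}) :
  tens (K := K) (c *: (u : {coef I, K})) v = c *: (tens u v : {coef _, K}).
Proof.
apply/ffunP => x; rewrite !ffunE.
by change (c * u x.1 * v x.2 = c * (u x.1 * v x.2)); rewrite mulrA.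
Qed.

Lemma tensZr c (u v : {ffun I -> K}) :
  tens (K := K) u (c *: (v : {coef I, K})) = c *: (tens u v : {coef _, K}).
Proof.
apply/ffunP => x; rewrite !ffunE.
by change (u x.1 * (c * v x.2) = c * (u x.1 * v x.2)); rewrite mulrCA.
Qed.

Variable mulb : I -> I -> {ffun I -> K}.

Lemma mulHE u v :
  mulH mulb u v = \sum_i \sum_j (u i * v j) *: (mulb i j : {coef I, K}).
Proof. by rewrite /mulH; under eq_bigr => i _ do under eq_bigr => j _ do rewrite scvE. Qed.

Lemma mulH_bvecl i v : mulH mulb (bvec K i) v = \sum_j v j *: (mulb i j : {coef I, K}).
Proof.
rewrite mulHE; under eq_bigr => a _ do under eq_bigr => b _ do rewrite bvecE -scalerA.
by under eq_bigr => a _ do rewrite -scaler_sumr; rewrite (sum_delta i (fun a => _)).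
Qed.

Lemma mulH_bvec i j : mulH mulb (bvec K i) (bvec K j) = mulb i j.
Proof.
by rewrite mulH_bvecl; under eq_bigr => k _ do rewrite ffunE; rewrite sum_delta.
Qed.

Lemma mulHHE U V : mulHH mulb U V =
  \sum_p \sum_r (U p * V r) *: (tens (mulb p.1 r.1) (mulb p.2 r.2) : {coef _, K}).
Proof. by rewrite /mulHH; under eq_bigr => p _ do under eq_bigr => r _ do rewrite scvE. Qed.

Lemma mulHH_bvec P R : mulHH mulb (bvec K P) (bvec K R) = tens (mulb P.1 R.1) (mulb P.2 R.2).
Proof.
rewrite mulHHE; under eq_bigr => p _ do under eq_bigr => r _ do rewrite !bvecE -scalerA.
by under eq_bigr => p _ do rewrite -scaler_sumr sum_delta; rewrite sum_delta.
Qed.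

Lemma mulHHDl U1 U2 V : mulHH mulb (U1 + U2) V = mulHH mulb U1 V + mulHH mulb U2 V.
Proof.
rewrite !mulHHE -big_split; apply: eq_bigr => p _.
by rewrite -big_split; apply: eq_bigr => r _; rewrite ffunE mulrDl scalerDl.
Qed.

Lemma mulHH_sumr U (J : Type) (r : seq J) (c : J -> K) (V : J -> {coef I * I, K}) :
  mulHH mulb U (\sum_(k <- r) c k *: V k) =
  \sum_(k <- r) c k *: (mulHH mulb U (V k) : {coef _, K}).
Proof.
rewrite !mulHHE.
under eq_bigr => p _ do under eq_bigr => s _ do rewrite sum_ffunE mulr_sumr scaler_suml.
under eq_bigr => p _ do rewrite exchange_big /=.
rewrite exchange_big /=; apply: eq_bigr => k _.
rewrite scaler_sumr; apply: eq_bigr => p _; rewrite scaler_sumr; apply: eq_bigr => s _.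
by rewrite ffunE scalerA mulrCA.
Qed.

End BasisCalculus.

Section PartialActionOnBasis.
Variables (K : fieldType) (I : finType) (A : algType K).
Variables (oneH : {ffun I -> K}) (mulb : I -> I -> {ffun I -> K}).
Variables (comulb : I -> {ffun I * I -> K}) (act : I -> A -> A).

Lemma actH_linear a : linear (fun h : {coef I, K} => actH act h a).
Proof.
move=> c h h'; rewrite /actH scaler_sumr -big_split; apply: eq_bigr => i _ /=.
by rewrite !ffunE scalerDl scalerA.
Qed.

Lemma actH_bvec i a : actH act (bvec K i) a = act i a.
Proof. by rewrite /actH; under eq_bigr => j _ do rewrite bvecE; rewrite sum_delta. Qed.

Lemma comulH_bvec i p : comulH comulb (bvec K i) p = comulb i p.
Proof.
rewrite /comulH sum_ffunE; under eq_bigr => j _ do rewrite ffunE bvecE.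
exact: (sum_delta (V := K^o)).
Qed.

Lemma comulHE h p : comulH comulb h p = \sum_i h i * comulb i p.
Proof. by rewrite /comulH sum_ffunE; apply: eq_bigr => i _; rewrite ffunE. Qed.

Lemma partial_action_of_basis :
  (forall i, linear (act i)) -> (forall a, actH act oneH a = a) ->
  (forall i a b, act i (a * b) = \sum_p comulb i p *: (act p.1 a * act p.2 b)) ->
  (forall i j a, act i (act j a) =
     \sum_p comulb i p *: (act p.1 1 * actH act (mulb p.2 j) a)) ->
  is_partial_action oneH mulb comulb act.
Proof.
move=> act_lin act_one act_mul act_comp; split=> // [h a b | h k a].
  under [RHS]eq_bigr => p _ do rewrite comulHE scaler_suml.
  rewrite /actH exchange_big /=; apply: eq_bigr => i _.
  by rewrite act_mul scaler_sumr; apply: eq_bigr => p _; rewrite scalerA.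
rewrite {1}/actH; under eq_bigr => i _ do rewrite linear_fun_sum //.
under [RHS]eq_bigr => p _ do
  rewrite mulH_bvecl (linear_fun_sum (actH_linear a)) mulr_sumr comulHE scaler_suml.
rewrite exchange_big /=; apply: eq_bigr => i _.
under eq_bigr => j _ do rewrite act_comp !scaler_sumr.
under [RHS]eq_bigr => p _ do
  (rewrite scaler_sumr; under eq_bigr => j _ do rewrite -scalerAr scalerA).
rewrite scaler_sumr exchange_big /=; apply: eq_bigr => j _.
rewrite scaler_sumr; apply: eq_bigr => p _.
by rewrite !scalerA; congr (_ *: _); ring.
Qed.

Hypothesis pa : is_partial_action oneH mulb comulb act.

Lemma partial_action_mul i a b :
  act i (a * b) = \sum_p comulb i p *: (act p.1 a * act p.2 b).
Proof.
case: pa => _ _ pa_mul _; have := pa_mul (bvec K i) a b.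
by rewrite actH_bvec => ->; under eq_bigr => p _ do rewrite comulH_bvec.
Qed.

Lemma partial_action_comp i j a :
  act i (act j a) = \sum_p comulb i p *: (act p.1 1 * actH act (mulb p.2 j) a).
Proof.
case: pa => _ _ _ pa_comp; have := pa_comp (bvec K i) (bvec K j) a.
rewrite !actH_bvec => ->; apply: eq_bigr => p _.
by rewrite comulH_bvec mulH_bvec.
Qed.

End PartialActionOnBasis.

Section TaftBasis.
Variables (K : fieldType) (n : nat) (q : K).
Hypothesis n_gt1 : (1 < n)%N.
Hypothesis qn : q ^+ n = 1.

Definition ord_mod m : 'I_n := Ordinal (ltn_pmod m (ltnW n_gt1)).
Definition taft_idx x y : 'I_n * 'I_n := (ord_mod x, ord_mod y).

Lemma ord_mod_ord (i : 'I_n) : ord_mod i = i.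
Proof. by apply: val_inj; rewrite /= modn_small. Qed.

Lemma oadd_ord_mod (i : 'I_n) k : oadd i k = ord_mod (i + k).
Proof. exact: val_inj. Qed.

Lemma eq_ord_mod x (i : 'I_n) : (ord_mod x == i) = (x %% n == i)%N.
Proof. by []. Qed.

Lemma oneTaftE : oneTaft K n = bvec K (taft_idx 0 0).
Proof.
apply/ffunP => -[a b]; rewrite !ffunE /= xpair_eqE !eq_ord_mod !mod0n.
by rewrite ![(0%N == _)]eq_sym.
Qed.

Lemma gTaftE : gTaft K n = bvec K (taft_idx 1 0).
Proof.
apply/ffunP => -[a b]; rewrite !ffunE /= xpair_eqE !eq_ord_mod !mod0n.
by rewrite ![(_ == val _)]eq_sym.
Qed.

Lemma xTaftE : xTaft K n = bvec K (taft_idx 0 1).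
Proof.
apply/ffunP => -[a b]; rewrite !ffunE /= xpair_eqE !eq_ord_mod !mod0n (modn_small n_gt1).
by rewrite ![(_ == val _)]eq_sym.
Qed.

Lemma mulTaftE x1 y1 x2 y2 : (y1 < n)%N -> (y2 < n)%N ->
  mulTaft q (taft_idx x1 y1) (taft_idx x2 y2) =
  if (y1 + y2 < n)%N
  then q ^+ (y1 * x2) *: (bvec K (taft_idx (x1 + x2) (y1 + y2)) : {coef _, K})
  else 0.
Proof.
move=> lt_y1 lt_y2; apply/ffunP => -[a b].
rewrite /mulTaft ffunE /= (modn_small lt_y1) (modn_small lt_y2) modnDm.
case: ltnP => [lt_y12 | ge_y12]; last first.
  rewrite ffunE; case: (nat_of_ord b =P (y1 + y2)%N) => [eq_b|]; last by rewrite andbF.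
  by have := ltn_ord b; rewrite eq_b ltnNge ge_y12.
rewrite ffunE bvecE /= xpair_eqE !eq_ord_mod (modn_small lt_y12).
rewrite [(_ == val a)]eq_sym [(_ == val b)]eq_sym -(expr_mod _ qn) modnMmr (expr_mod _ qn).
by case: andP => _; [rewrite [RHS]mulr1 | rewrite [RHS]mulr0].
Qed.

Lemma mulTaftE_small x1 y1 x2 y2 : (y1 + y2 < n)%N ->
  mulTaft q (taft_idx x1 y1) (taft_idx x2 y2) =
  q ^+ (y1 * x2) *: (bvec K (taft_idx (x1 + x2) (y1 + y2)) : {coef _, K}).
Proof. by move=> lt_y12; rewrite mulTaftE ?lt_y12 //; lia. Qed.

Lemma powTaft2_g i :
  powTaft2 q (tens (gTaft K n) (gTaft K n)) i = bvec K (taft_idx i 0, taft_idx i 0).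
Proof.
elim: i => [|i IH]; first by rewrite /powTaft2 /= oneTaftE tens_bvec.
rewrite [LHS]/powTaft2 iterS -[iter _ _ _]/(powTaft2 _ _ _) IH gTaftE tens_bvec mulHH_bvec /=.
by rewrite mulTaftE_small ?addn0 ?(ltnW n_gt1) // mul0n expr0 !scale1r tens_bvec add1n.
Qed.

Lemma powTaft2_x j : (j < n)%N ->
  powTaft2 q (tens (xTaft K n) (oneTaft K n) + tens (gTaft K n) (xTaft K n)) j =
  \sum_(0 <= k < j.+1)
    qbinom q j k *: (bvec K (taft_idx k (j - k), taft_idx 0 k) : {coef _, K}).
Proof.
elim: j => [|j IH] lt_j; first by rewrite big_nat1 /powTaft2 /= oneTaftE tens_bvec scale1r.
rewrite [LHS]/powTaft2 iterS -[iter _ _ _]/(powTaft2 _ _ _) IH ?(ltnW lt_j) //.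
rewrite xTaftE gTaftE oneTaftE !tens_bvec mulHHDl !mulHH_sumr -big_split big_qbinomS.
apply: eq_big_nat => k /andP[_ le_k_j] /=.
rewrite !mulHH_bvec /= !mulTaftE_small; try lia.
rewrite !tensZl !tensZr !tens_bvec ?mul0n ?muln0 ?mul1n ?expr0 ?scale1r ?add0n ?addn0.
by rewrite scalerA mulrC subSS !add1n subSn.
Qed.

Lemma comulTaftE b : comulTaft q b =
  \sum_(0 <= k < b.2.+1) qbinom q b.2 k *:
     (bvec K (taft_idx (b.1 + k) (b.2 - k), taft_idx b.1 k) : {coef _, K}).
Proof.
rewrite /comulTaft powTaft2_g powTaft2_x // mulHH_sumr.
apply: eq_big_nat => k /andP[_ le_k_b] /=; have lt_b2 := ltn_ord b.2.
rewrite mulHH_bvec /= !mulTaftE_small; try lia.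
by rewrite !tensZl !tensZr !tens_bvec ?mul0n ?expr0 ?scale1r ?add0n ?addn0.
Qed.

End TaftBasis.

Section CyclicGroupAction.
Variables (K : fieldType) (n : nat) (A : algType K) (actC : 'I_n -> A -> A).
Hypothesis actC_pa : is_partial_action (oneCn K n) (@mulCn K n) (@comulCn K n) actC.

Lemma sum_comulCn (V : lmodType K) i (F : 'I_n * 'I_n -> V) :
  \sum_p comulCn K i p *: F p = F (i, i).
Proof.
rewrite -(sum_delta (i, i) F); apply: eq_bigr => -[x y] _.
by rewrite ffunE /= xpair_eqE !(eq_sym i).
Qed.

Lemma actC_mul i a b : actC i (a * b) = actC i a * actC i b.
Proof.
by rewrite (partial_action_mul actC_pa) (sum_comulCn i (fun p => actC p.1 a * actC p.2 b)).
Qed.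

Lemma actC_comp i k a : actC i (actC k a) = actC i 1 * actC (oadd i k) a.
Proof.
rewrite (partial_action_comp actC_pa).
by rewrite (sum_comulCn i (fun p => actC p.1 1 * actH actC (mulCn K p.2 k) a)) /= actH_bvec.
Qed.

Lemma actC_unit (i : 'I_n) a : val i = 0%N -> actC i a = a.
Proof.
move=> i0; case: actC_pa => _ actC_one _ _; rewrite -[RHS]actC_one.
suff -> : oneCn K n = bvec K i by rewrite actH_bvec.
by apply/ffunP => j; rewrite !ffunE -i0 (inj_eq val_inj) eq_sym.
Qed.

End CyclicGroupAction.

Section TaftPartialAction.
Variables (K : fieldType) (n : nat) (q : K) (A : algType K).
Variables (actC : 'I_n -> A -> A) (w : A).
Hypothesis n_gt1 : (1 < n)%N.
Hypothesis prim_q : n.-primitive_root q.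
Hypothesis actC_pa : is_partial_action (oneCn K n) (@mulCn K n) (@comulCn K n) actC.
Hypothesis w_central : forall y, w ^+ n * y = y * w ^+ n.
Hypothesis actC_w : forall i : 'I_n, actC i w = q ^- i *: (actC i 1 * w).

Let qn : q ^+ n = 1 := prim_expr_order prim_q.
Let q_neq0 : q != 0.
Proof. by rewrite (prim_root_eq0 prim_q) -lt0n ltnW. Qed.

Definition gpow_act m := actC (ord_mod n_gt1 m).

Lemma gpow_act_linear m : linear (gpow_act m).
Proof. by case: actC_pa => actC_lin _ _ _; apply: actC_lin. Qed.

Lemma gpow_actM m a b : gpow_act m (a * b) = gpow_act m a * gpow_act m b.
Proof. exact: actC_mul. Qed.

Lemma gpow_act_comp i k a : gpow_act i (gpow_act k a) = gpow_act i 1 * gpow_act (i + k) a.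
Proof.
rewrite /gpow_act actC_comp // oadd_ord_mod; congr (_ * actC _ a).
by apply: val_inj; rewrite /= modnDm.
Qed.

Lemma gpow_act_w m : gpow_act m w = q ^- m *: (gpow_act m 1 * w).
Proof. by rewrite /gpow_act actC_w /= (prim_expr_mod prim_q). Qed.

Lemma gpow_act_mod m a : gpow_act (m %% n) a = gpow_act m a.
Proof. by congr (actC _ a); apply: val_inj; rewrite /= modn_mod. Qed.

Notation gx := (gx_act q gpow_act w).
Notation taft := (taft_act q actC w).

Lemma taft_act_gx b a : taft b a = gx b.1 b.2 a.
Proof.
rewrite gx_actE /taft_act big_mkord; congr (_ *: _); apply: eq_bigr => k _.
by rewrite /gpow_act -oadd_ord_mod.
Qed.

Lemma taft_act_idx x y a : (y < n)%N -> taft (taft_idx n_gt1 x y) a = gx x y a.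
Proof.
move=> lt_y; rewrite taft_act_gx /= (modn_small lt_y).
exact: (gx_act_mod w prim_q gpow_act_mod).
Qed.

Lemma taft_act_mul c a b :
  taft c (a * b) = \sum_p comulTaft q c p *: (taft p.1 a * taft p.2 b).
Proof.
rewrite (comulTaftE n_gt1 qn) (sum_bvec _ _ _ (fun p => taft p.1 a * taft p.2 b)).
rewrite taft_act_gx (gx_actM w q_neq0 gpow_actM); apply: eq_big_nat => k /andP[_ le_k_c] /=.
by have lt_c2 := ltn_ord c.2; rewrite !taft_act_idx //; lia.
Qed.

Lemma taft_act_comp c d a :
  taft c (taft d a) =
  \sum_p comulTaft q c p *: (taft p.1 1 * actH taft (mulTaft q p.2 d) a).
Proof.
rewrite (comulTaftE n_gt1 qn)
  (sum_bvec _ _ _ (fun p => taft p.1 1 * actH taft (mulTaft q p.2 d) a)).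
rewrite !taft_act_gx (gx_act_comp gpow_act_linear q_neq0 gpow_actM gpow_act_comp gpow_act_w).
apply: eq_big_nat => m /andP[_ le_m_c] /=.
have lt_c2 := ltn_ord c.2; have lt_d2 := ltn_ord d.2.
rewrite [in RHS](_ : d = taft_idx n_gt1 d.1 d.2); last first.
  by case: d {lt_d2} => d1 d2; rewrite /taft_idx !ord_mod_ord.
rewrite mulTaftE //; last by lia.
case: ltnP => [lt_md | ge_md].
  rewrite (linear_funZ (actH_linear taft a)) actH_bvec -scalerAr scalerA !taft_act_idx //; lia.
rewrite (linear_fun0 (actH_linear taft a)) mulr0 scaler0.
by rewrite (gx_act_ge prim_q gpow_act_mod w_central _ _ ge_md) mulr0 scaler0.
Qed.

Lemma taft_act_linear b : linear (taft b).
Proof.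
by move=> c x y; rewrite !taft_act_gx; apply: gx_act_linear; apply: gpow_act_linear.
Qed.

Lemma taft_act_one a : actH taft (oneTaft K n) a = a.
Proof.
rewrite (oneTaftE K n_gt1) actH_bvec taft_act_idx ?(ltnW n_gt1) //=.
by apply: (actC_unit actC_pa); rewrite /= mod0n.
Qed.

End TaftPartialAction.

Theorem proposition3p7 (K : fieldType) (n : nat) (q : K) (A : algType K)
  (actC : 'I_n -> A -> A) (w : A) :
  (2 <= n)%N ->
  n.-primitive_root q ->
  is_partial_action (oneCn K n) (@mulCn K n) (@comulCn K n) actC ->
  (forall i : 'I_n, val i = 1%N -> actC i 1 = 0) ->
  (forall y : A, w ^+ n * y = y * w ^+ n) ->
  (forall i : 'I_n, actC i w = q ^- (val i) *: (actC i 1 * w)) ->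
  is_partial_action (oneTaft K n) (@mulTaft K n q) (@comulTaft K n q)
    (@taft_act K n q A actC w).
Proof.
move=> n_gt1 prim_q actC_pa _ w_central actC_w.
apply: partial_action_of_basis.
- exact: taft_act_linear.
- exact: taft_act_one.
- exact: taft_act_mul.
- exact: taft_act_comp.
Qed.
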